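(* Let $\sum_{\mathbf n\in\mathbb N_0^d}a_{\mathbf n}$ be a $d$-fold numerical series ($a_{\mathbf n}\in\mathbb C$) such that every $\mathbf n$ with $a_{\mathbf n}\neq0$ lies in $\{\mathbf 0\}\cup\bigcup_{k\in\mathbb N_0}B_k$, where $B_k=\{\mathbf n\in\mathbb N_0^d: 2^k\mathbf 1\le\mathbf n<2^{k+1}\mathbf 1\}$, and suppose the series converges by rectangles to $S$, i.e. $\sum_{\mathbf n<\mathbf N}a_{\mathbf n}\to S$ as $\min_jN^j\to\infty$. Then for every permutation $(j_1,\dots,j_d)$ of $(1,\dots,d)$ the iterated sum $\sum_{n^{j_1}\in\mathbb N_0}\big(\sum_{n^{j_2}\in\mathbb N_0}\big(\cdots\big(\sum_{n^{j_d}\in\mathbb N_0}a_{n^1,\dots,n^d}\big)\cdots\big)\big)$ exists and equals $S$.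
   Context: $d\ge2$ is an integer. Vectors in $\mathbb N_0^d$ are compared coordinatewise ($\mathbf a<\mathbf b$ iff $a^j<b^j$ for all $j$), $\mathbf 0=(0,\dots,0)$, $\mathbf 1=(1,\dots,1)$. *)

From HB Require Import structures.
From mathcomp Require Import all_boot all_order all_algebra all_fingroup.
From mathcomp Require Import complex.
From mathcomp Require Import all_classical all_reals all_analysis.
Set Implicit Arguments. Unset Strict Implicit. Unset Printing Implicit Defensive.
Import Order.TTheory GRing.Theory Num.Theory.
Import numFieldNormedType.Exports.
Local Open Scope classical_set_scope.
Local Open Scope ring_scope.

Definition upd (d : nat) (x : 'I_d -> nat) (j : 'I_d) (m : nat) : 'I_d -> nat :=
  fun i => if i == j then m else x i.

(* rect_sum l N a x : sum of a over the coordinates in l ranging over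
   0 <= n^j < N^j, the other coordinates being fixed to those of x. *)
Fixpoint rect_sum (d : nat) (K : numFieldType) (l : seq 'I_d) (N : 'I_d -> nat)
    (a : ('I_d -> nat) -> K) (x : 'I_d -> nat) : K :=
  match l with
  | [::] => a x
  | j :: l' => \sum_(m < N j) rect_sum l' N a (upd x j m)
  end.

Definition rect_partial_sum (d : nat) (K : numFieldType) (a : ('I_d -> nat) -> K)
    (N : 'I_d -> nat) : K :=
  rect_sum (enum 'I_d) N a (fun _ => 0%N).

Definition rect_converges (d : nat) (K : numFieldType) (a : ('I_d -> nat) -> K)
    (S : K) : Prop :=
  forall e : K, 0 < e -> exists M : nat, forall N : 'I_d -> nat,
    (forall j, (M <= N j)%N) -> `|rect_partial_sum a N - S| < e.

(* iter_sum_is l a x s : the iterated sum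
   sum_{n^{j1}} ( sum_{n^{j2}} ( ... sum_{n^{jk}} a_n ) ), l = [:: j1; ...; jk],
   (other coordinates fixed to those of x) exists and equals s:
   every inner iterated series converges and the outer series converges to s. *)
Fixpoint iter_sum_is (d : nat) (K : numFieldType) (l : seq 'I_d)
    (a : ('I_d -> nat) -> K) (x : 'I_d -> nat) (s : K) : Prop :=
  match l with
  | [::] => a x = s
  | j :: l' => exists g : nat -> K,
      (forall m, iter_sum_is l' a (upd x j m) (g m)) /\ series g @ \oo --> s
  end.

Definition in_block (d : nat) (k : nat) (n : 'I_d -> nat) : Prop :=
  forall j, (2 ^ k <= n j < 2 ^ k.+1)%N.

(* If the support of a lies in the cone where every coordinate is at most c
   times every other one (for the dyadic blocks c = 2), then fixing the first
   summation index n^j0 = m confines all other indices below c m + 1.  Every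
   inner iterated sum is therefore a finite rectangular sum, and the M-th
   partial sum of the outermost series is the rectangular partial sum over the
   box with side M in direction j0 and c M in the other directions, whose
   limit is S by convergence by rectangles. *)
From HB Require Import structures.
From mathcomp Require Import all_boot all_order all_algebra all_fingroup.
From mathcomp Require Import complex.
From mathcomp Require Import all_classical all_reals all_analysis.
Import Order.TTheory GRing.Theory Num.Theory.
Import numFieldNormedType.Exports.
Local Open Scope classical_set_scope.
Local Open Scope ring_scope.
Local Open Scope complex_scope.

Set Implicit Arguments.
Unset Strict Implicit.

Lemma big_nat_trunc (V : nmodType) (F : nat -> V) (n0 n : nat) :
  (forall m, (n0 <= m)%N -> F m = 0) -> (n0 <= n)%N ->
  \sum_(0 <= m < n) F m = \sum_(0 <= m < n0) F m.
Proof.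
move=> F0 le_n0n; rewrite (big_cat_nat (leq0n n0) le_n0n) /=.
rewrite [X in _ + X]big1_seq ?addr0 // => m /andP[_].
by rewrite mem_index_iota => /andP[le_n0m _]; exact: F0.
Qed.

Lemma perm_enum_map (T : finType) (s : {perm T}) :
  perm_eq [seq s i | i <- enum T] (enum T).
Proof.
apply: uniq_perm; rewrite ?(map_inj_uniq (@perm_inj _ s)) ?enum_uniq //.
by move=> i; rewrite mem_enum -{1}(permKV s i) map_f ?mem_enum.
Qed.

Section RectSum.
Variables (d : nat) (K : numFieldType).
Implicit Types (l : seq 'I_d) (N x y : 'I_d -> nat) (a : ('I_d -> nat) -> K).

Lemma upd_eq x j m : upd x j m j = m.
Proof. by rewrite /upd eqxx. Qed.

Lemma upd_neq x i j m : i != j -> upd x j m i = x i.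
Proof. by rewrite /upd => /negbTE->. Qed.

Definition agree_off l y x := forall i, i \notin l -> y i = x i.

Definition box_supported l N a x :=
  forall y, agree_off l y x -> a y != 0 -> forall j, j \in l -> (y j < N j)%N.

Lemma agree_off_upd l j m y x :
  agree_off l y (upd x j m) -> agree_off (j :: l) y x.
Proof.
move=> yx i; rewrite in_cons negb_or => /andP[ij il].
by rewrite yx // upd_neq.
Qed.

Lemma agree_off_upd_eq l j m y x :
  j \notin l -> agree_off l y (upd x j m) -> y j = m.
Proof. by move=> jl yx; rewrite yx // upd_eq. Qed.

Lemma box_supported_upd j l N a x m :
  box_supported (j :: l) N a x -> box_supported l N a (upd x j m).
Proof.
move=> supp_a y yx ay0 i il.
by apply: (supp_a y) => //; [exact: agree_off_upd yx | rewrite in_cons il orbT].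
Qed.

Lemma rect_sum_eq0 l N a x :
  (forall y, agree_off l y x ->
     (forall j, j \in l -> (y j < N j)%N) -> a y = 0) ->
  rect_sum l N a x = 0.
Proof.
elim: l x => [|j l IHl] x a0 /=; first exact: a0.
apply: big1 => m _; apply: IHl => y yx y_box; apply: a0.
  exact: agree_off_upd yx.
move=> i; rewrite in_cons => /orP[/eqP-> | il]; last exact: y_box.
have [jl | jNl] := boolP (j \in l); first exact: y_box.
by rewrite (agree_off_upd_eq jNl yx).
Qed.

Lemma rect_sum_upd_out_of_box j l N N' a x m :
  j \notin l -> box_supported (j :: l) N a x -> (N j <= m)%N ->
  rect_sum l N' a (upd x j m) = 0.
Proof.
move=> jl supp_a le_Nm; apply: rect_sum_eq0 => y yx _.
apply/eqP; apply: contraTT le_Nm => ay0; rewrite -ltnNge.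
have := supp_a y (agree_off_upd yx) ay0 j (mem_head _ _).
by rewrite (agree_off_upd_eq jl yx).
Qed.

Lemma rect_sum_widen l N N' a x : uniq l -> box_supported l N a x ->
  (forall j, j \in l -> (N j <= N' j)%N) ->
  rect_sum l N' a x = rect_sum l N a x.
Proof.
elim: l x => [|j l IHl] x //= /andP[jl ul] supp_a le_NN'.
transitivity (\sum_(m < N' j) rect_sum l N a (upd x j m)).
  apply: eq_bigr => m _; apply: IHl => //; first exact: box_supported_upd.
  by move=> i il; apply: le_NN'; rewrite in_cons il orbT.
rewrite -!(big_mkord xpredT (fun m => rect_sum l N a (upd x j m))).
apply: big_nat_trunc; last exact/le_NN'/mem_head.
by move=> m; apply: rect_sum_upd_out_of_box.
Qed.

Lemma iter_sum_is_rect_sum l N a x : uniq l -> box_supported l N a x ->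
  iter_sum_is l a x (rect_sum l N a x).
Proof.
elim: l x => [|j l IHl] x //= /andP[jl ul] supp_a.
exists (fun m => rect_sum l N a (upd x j m)); split.
  by move=> m; apply: IHl => //; exact: box_supported_upd.
apply: cvg_near_cst; apply: filterS (nbhs_infty_ge (N j)) => n le_Nn.
rewrite /series /= (@big_nat_trunc _ _ (N j)) ?big_mkord //.
by move=> m; apply: rect_sum_upd_out_of_box.
Qed.

Lemma rect_sum_swap i j l N a x : i != j ->
  rect_sum [:: i, j & l] N a x = rect_sum [:: j, i & l] N a x.
Proof.
move=> ij /=; rewrite exchange_big /=.
apply: eq_bigr => m' _; apply: eq_bigr => m _; congr rect_sum.
apply/funext => k; rewrite /upd.
by case: (eqVneq k j) => [->|//]; rewrite eq_sym (negbTE ij).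
Qed.

Lemma rect_sum_move_front j p q N a x : j \notin p ->
  rect_sum (p ++ j :: q) N a x = rect_sum (j :: p ++ q) N a x.
Proof.
elim: p x => [|i p IHp] x //; rewrite in_cons negb_or => /andP[ji jp].
rewrite -rect_sum_swap 1?eq_sym //=.
by apply: eq_bigr => m _; exact: IHp.
Qed.

Lemma rect_sum_perm l1 l2 N a x : uniq l1 -> perm_eq l1 l2 ->
  rect_sum l1 N a x = rect_sum l2 N a x.
Proof.
elim: l1 l2 x => [|j l1 IHl] l2 x u1 eq12.
  by case: l2 eq12 => // ? ? /perm_size.
have u2 : uniq l2 by rewrite -(perm_uniq eq12).
have jl2 : j \in l2 by rewrite -(perm_mem eq12) mem_head.
case/splitPr: jl2 eq12 u2 => p q eq12 u2; move/andP: u1 => [jl1 ul1].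
have jp : j \notin p.
  by move: u2; rewrite cat_uniq => /and3P[_ /hasPn/(_ j (mem_head _ _)) + _].
rewrite rect_sum_move_front //=; apply: eq_bigr => m _; apply: IHl => //.
rewrite -(perm_cons j).
exact: perm_trans eq12 (permEl (perm_catCA p [:: j] q)).
Qed.

End RectSum.

Section ConeSupport.
Variables (d : nat) (K : numFieldType) (c : nat) (a : ('I_d -> nat) -> K).
Hypothesis c_gt0 : (0 < c)%N.
Hypothesis supp_cone : forall n, a n != 0 -> forall i j, (n j <= c * n i)%N.

Let origin : 'I_d -> nat := fun=> 0%N.

Lemma cone_box_supported j0 l (m : nat) N :
  j0 \notin l -> (forall j, j \in l -> (c * m < N j)%N) ->
  box_supported l N a (upd origin j0 m).
Proof.
move=> j0l le_N y yx ay0 j jl; apply: leq_trans (le_N j jl).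
by rewrite ltnS -(agree_off_upd_eq j0l yx); exact: supp_cone.
Qed.

Lemma iter_sum_is_rect_converges j0 l S : perm_eq (j0 :: l) (enum 'I_d) ->
  rect_converges a S -> iter_sum_is (j0 :: l) a origin S.
Proof.
move=> perm_l a_cvg.
have /andP[j0l ul] : uniq (j0 :: l) by rewrite (perm_uniq perm_l) enum_uniq.
pose inner m := rect_sum l (fun=> (c * m).+1) a (upd origin j0 m).
pose box M j := if j == j0 then M else (c * M)%N.
have series_inner M : series inner M = rect_partial_sum a (box M).
  have perm_enum : perm_eq (enum 'I_d) (j0 :: l) by rewrite perm_sym.
  rewrite /rect_partial_sum (rect_sum_perm _ _ _ (enum_uniq _) perm_enum).
  rewrite /= /box eqxx /series /= big_mkord; apply: eq_bigr => m _.
  symmetry; apply: rect_sum_widen => //; first exact: cone_box_supported.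
  move=> j jl; rewrite ifN; last by apply: contraNneq j0l => <-.
  by rewrite ltn_pmul2l.
exists inner; split.
  by move=> m; apply: iter_sum_is_rect_sum => //; exact: cone_box_supported.
apply/cvgrPdist_lt => e e_gt0; have [M0 cvgM0] := a_cvg e e_gt0.
near=> M; rewrite series_inner distrC; apply: cvgM0 => j.
have M0M : (M0 <= M)%N by near: M; exact: nbhs_infty_ge.
rewrite /box; case: (j == j0) => //.
by apply: leq_trans M0M _; exact: leq_pmull.
Unshelve. all: by end_near.
Qed.

End ConeSupport.

Lemma dyadic_support_cone d (K : numFieldType) (a : ('I_d -> nat) -> K) :
  (forall n, a n != 0 -> (forall j, n j = 0%N) \/ exists k, in_block k n) ->
  forall n, a n != 0 -> forall i j, (n j <= 2 * n i)%N.
Proof.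
move=> supp_a n an0 i j; case: (supp_a n an0) => [-> // | [k n_k]].
move: (n_k i) (n_k j) => /andP[le_ki _] /andP[_]; rewrite expnS => lt_jk.
by apply: leq_trans (ltnW lt_jk) _; rewrite leq_mul2l.
Qed.

Theorem proposition1 (R : realType) (d : nat) (hd : (2 <= d)%N)
    (a : ('I_d -> nat) -> R[i]) (S : R[i])
    (hsupp : forall n : 'I_d -> nat, a n != 0 ->
       (forall j, n j = 0%N) \/ exists k : nat, in_block k n)
    (hconv : rect_converges a S) :
  forall sigma : 'S_d,
    iter_sum_is [seq sigma i | i <- enum 'I_d] a (fun _ => 0%N) S.
Proof.
move=> sigma; have := perm_enum_map sigma.
case: [seq sigma i | i <- enum 'I_d] => [|j0 l] perm_l.
  by move/perm_size: perm_l; rewrite size_enum_ord => d0; rewrite -d0 in hd.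
apply: (iter_sum_is_rect_converges (c := 2)) perm_l hconv => //.
exact: dyadic_support_cone.
Qed.
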